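(* Let $N\ge 1$, let $q\in\mathbb C$, and let $S_N$ be the symmetric group with group algebra $\mathbb C[S_N]$, with composition convention $(\sigma_2\sigma_1)(i)=\sigma_2(\sigma_1(i))$, and let $e$ be its identity element. For a transposition $t=(A,A+1)$ of neighboring integers and $x\in\mathbb C$, let $w_{t,x}:\mathbb C[S_N]\to\mathbb C[S_N]$ be the linear operator given on $\sigma\in S_N$ by $$w_{t,x}(\sigma)=\begin{cases}(1-x)\sigma+x\,t\sigma, & \text{if } \sigma^{-1}(A)<\sigma^{-1}(A+1),\\ (1-qx)\sigma+qx\,t\sigma, & \text{if } \sigma^{-1}(A)>\sigma^{-1}(A+1).\end{cases}$$ For any transpositions of neighboring integers $t_1,\dots,t_n$ and parameters $x_1,\dots,x_n\in\mathbb C$, define coefficients $f_n(s\to\pi)$ and $\tilde f_n(s\to\pi)$, $s,\pi\in S_N$, by $$w_{t_n,x_n}\cdots w_{t_1,x_1}\, s=\sum_{\pi\in S_N} f_n(s\to\pi)\,\pi,\qquad w_{t_1,x_1}w_{t_2,x_2}\cdots w_{t_n,x_n}\, s=\sum_{\pi\in S_N}\tilde f_n(s\to\pi)\,\pi .$$ Then for every $\pi\in S_N$, $$f_n(e\to\pi)=\tilde f_n(e\to\pi^{-1}).$$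
   Context: All objects are defined in the claim; the operators are applied in opposite orders in the definitions of $f_n$ and $\tilde f_n$. *)

From HB Require Import structures.
From mathcomp Require Import all_boot all_order all_algebra all_fingroup.
From mathcomp Require Import complex.
From mathcomp Require Import Rstruct.
Set Implicit Arguments. Unset Strict Implicit. Unset Printing Implicit Defensive.
Import Order.TTheory GRing.Theory Num.Theory.
Local Open Scope ring_scope.

Notation C := (complex Rdefinitions.R).

(* Elements of the group algebra C[S_N] are represented by their coefficient
   functions 'S_N -> C; the basis element sigma is [delta sigma]. *)
Definition delta (N : nat) (s : 'S_N) : 'S_N -> C :=
  fun p => if p == s then 1 else 0.

(* The adjacent transposition t = (A, A+1); meaningful when A.+1 < N. *)
Definition adjt (N : nat) (A : 'I_N) : 'S_N := tperm A (insubd A A.+1).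

(* Coefficient of pi in w_{t,x}(sigma), for t = (A,A+1).  The paper's product
   t sigma (apply sigma first, then t) is [sigma * adjt A] in MathComp, since
   (s * t) i = t (s i) (lemma permM). *)
Definition wcoef (N : nat) (q x : C) (A : 'I_N) (sigma pi : 'S_N) : C :=
  let y := if (val ((sigma^-1)%g A) < val ((sigma^-1)%g (insubd A A.+1)))%N then x else q * x in
  (if pi == sigma then 1 - y else 0) + (if pi == (sigma * adjt A)%g then y else 0).

Definition wop (N : nat) (q : C) (Ax : 'I_N * C) (v : 'S_N -> C) : 'S_N -> C :=
  fun pi => \sum_(sigma : 'S_N) v sigma * wcoef q Ax.2 Ax.1 sigma pi.

(* For l = [:: (A_1,x_1); ...; (A_n,x_n)]:
   f l s   = w_{t_n,x_n} ... w_{t_1,x_1} s   (t_1 applied first),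
   ftilde l s = w_{t_1,x_1} ... w_{t_n,x_n} s (t_n applied first). *)
Definition f (N : nat) (q : C) (l : seq ('I_N * C)) (s : 'S_N) : 'S_N -> C :=
  foldl (fun v Ax => wop q Ax v) (delta s) l.
Definition ftilde (N : nat) (q : C) (l : seq ('I_N * C)) (s : 'S_N) : 'S_N -> C :=
  foldr (fun Ax v => wop q Ax v) (delta s) l.

From HB Require Import structures.
From mathcomp Require Import all_boot all_order all_algebra all_fingroup.
From mathcomp Require Import complex.
From mathcomp Require Import Rstruct.
From mathcomp Require Import ring zify.
From Stdlib Require Import FunctionalExtensionality.
Set Implicit Arguments. Unset Strict Implicit. Unset Printing Implicit Defensive.
Import GRing.Theory.
Local Open Scope ring_scope.

(* Conjugating w_{t,x} by the antipode sigma |-> sigma^-1 gives an operator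
   R_{t,x} that multiplies by t on the other side, its rate now governed by
   whether sigma itself (rather than sigma^-1) ascends at A.  Left and right
   operators commute: the two multiplications only interact when sigma maps
   {B, B+1} onto {A, A+1}, and then t_B sigma = sigma t_A while both rates
   flip together.  As w_{t,x} and R_{t,x} agree on e, commuting each w_{t_i}
   past the R's gives w_{t_1} ... w_{t_n} e = R_{t_n} ... R_{t_1} e, the
   antipode of w_{t_n} ... w_{t_1} e. *)

Section AdjacentTranspositions.
Variable N : nat.
Implicit Types (i j u v : 'I_N) (p : 'S_N).

Definition ord_succ i : 'I_N := insubd i i.+1.

Definition ascent p i : bool := (val (p i) < val (p (ord_succ i)))%N.

Definition maps_pair p i j : bool :=
  (p i == j) && (p (ord_succ i) == ord_succ j)
  || (p i == ord_succ j) && (p (ord_succ i) == j).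

Lemma val_ord_succ i : (i.+1 < N)%N -> val (ord_succ i) = i.+1.
Proof. by move=> lt_iN; rewrite /ord_succ val_insubd lt_iN. Qed.

Lemma adjtV i : (adjt i)^-1%g = adjt i.
Proof. exact: tpermV. Qed.

Lemma mulg_adjtK i p : (p * adjt i * adjt i)%g = p.
Proof. by rewrite -mulgA /adjt tperm2 mulg1. Qed.

Lemma val_tperm i j u :
  val (tperm i j u) = if u == j then val i else if u == i then val j else val u.
Proof.
case: tpermP => [->|->|/eqP ne_ui /eqP ne_uj]; rewrite ?eqxx //.
  by case: eqP => // ->.
by rewrite (negPf ne_ui) (negPf ne_uj).
Qed.

Lemma adjt_ltE j u v : (j.+1 < N)%N ->
  ~~ ((u == j) && (v == ord_succ j) || (u == ord_succ j) && (v == j)) ->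
  (val (adjt j u) < val (adjt j v))%N = (val u < val v)%N.
Proof.
move=> lt_jN; rewrite /adjt !val_tperm -/(ord_succ j) -!val_eqE val_ord_succ //.
by case: (val u =P j.+1); case: (val u =P val j); case: (val v =P j.+1);
  case: (val v =P val j) => /= *; lia.
Qed.

Lemma ascent_adjtM i p : (i.+1 < N)%N -> ascent (adjt i * p) i = ~~ ascent p i.
Proof.
move=> lt_iN; rewrite /ascent !permM /adjt -/(ord_succ i) tpermL tpermR.
have ne_succ : ord_succ i != i by rewrite -val_eqE val_ord_succ //= eqn_leq ltnn.
by rewrite -leqNgt ltn_neqAle val_eqE (inj_eq perm_inj) ne_succ.
Qed.

Lemma ascent_Madjt i j p : (j.+1 < N)%N -> ~~ maps_pair p i j ->
  ascent (p * adjt j) i = ascent p i.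
Proof. by move=> lt_jN not_maps; rewrite /ascent !permM adjt_ltE. Qed.

Lemma maps_pairV p i j : maps_pair p^-1 j i = maps_pair p i j.
Proof.
have invE u v : ((p^-1)%g u == v) = (p v == u).
  by apply/eqP/eqP => [<-|<-]; rewrite ?permKV ?permK.
by rewrite /maps_pair !invE; do !case: (_ == _).
Qed.

Lemma maps_pair_adjtM p i j : maps_pair p i j -> (adjt i * p = p * adjt j)%g.
Proof.
move=> maps; have conj_adjt : (adjt i ^ p)%g = adjt j.
  rewrite /adjt tpermJ -/(ord_succ i) -/(ord_succ j).
  by case/orP: maps => /andP[/eqP -> /eqP ->] //; apply: tpermC.
by rewrite -conj_adjt /conjg mulgA mulgV mul1g.
Qed.

Lemma maps_pair_ascentV p i j : (i.+1 < N)%N -> (j.+1 < N)%N ->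
  maps_pair p i j -> ascent p^-1 j = ascent p i.
Proof.
move=> lt_iN lt_jN; rewrite /ascent.
case/orP=> /andP[/eqP pi /eqP psi]; rewrite -{1}pi -psi !permK pi psi.
  by rewrite !val_ord_succ // !ltnSn.
by rewrite !val_ord_succ // !ltnNge !leqnSn.
Qed.

End AdjacentTranspositions.

Section Operators.
Variables (N : nat) (q : C).
Implicit Types (A B : 'I_N) (x y : C) (p s : 'S_N) (v : 'S_N -> C).

Definition rate x (b : bool) : C := if b then x else q * x.

Definition antipode v : 'S_N -> C := fun p => v p^-1%g.

Definition rwop (Ax : 'I_N * C) v : 'S_N -> C := antipode (wop q Ax (antipode v)).

Lemma antipodeK : involutive antipode.
Proof. by move=> v; apply: functional_extensionality => p; rewrite /antipode invgK. Qed.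

Lemma antipode_delta s : antipode (delta s) = delta s^-1.
Proof.
apply: functional_extensionality => p.
by rewrite /antipode /delta -(inj_eq invg_inj) invgK.
Qed.

Lemma rwop_antipode Ax v : rwop Ax (antipode v) = antipode (wop q Ax v).
Proof. by rewrite /rwop antipodeK. Qed.

Lemma wcoefE x A s p :
  wcoef q x A s p = (if p == s then 1 - rate x (ascent s^-1 A) else 0)
                    + (if p == (s * adjt A)%g then rate x (ascent s^-1 A) else 0).
Proof. by []. Qed.

Lemma sum_mul_ifeq (F G : 'S_N -> C) p :
  \sum_s F s * (if p == s then G s else 0) = F p * G p.
Proof.
rewrite (bigD1 p) //= eqxx big1 ?addr0 // => s ne_sp.
by rewrite eq_sym (negPf ne_sp) mulr0.
Qed.

Lemma wopE A x v p : (A.+1 < N)%N ->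
  wop q (A, x) v p =
  (1 - rate x (ascent p^-1 A)) * v p + rate x (~~ ascent p^-1 A) * v (p * adjt A)%g.
Proof.
move=> lt_AN; rewrite /wop /=.
under eq_bigr => s _ do rewrite wcoefE mulrDr.
rewrite big_split /= [X in _ + X](reindex_inj (mulIg (adjt A))) /=.
under [X in _ + X]eq_bigr => s _ do rewrite mulg_adjtK.
rewrite !sum_mul_ifeq invMg adjtV ascent_adjtM //.
by rewrite mulrC [X in _ + X]mulrC.
Qed.

Lemma rwopE B x v p : (B.+1 < N)%N ->
  rwop (B, x) v p =
  (1 - rate x (ascent p B)) * v p + rate x (~~ ascent p B) * v (adjt B * p)%g.
Proof.
by move=> lt_BN; rewrite /rwop {1}/antipode wopE // invgK /antipode invMg invgK adjtV.
Qed.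

Lemma wop_rwopC A x B y v : (A.+1 < N)%N -> (B.+1 < N)%N ->
  wop q (A, x) (rwop (B, y) v) = rwop (B, y) (wop q (A, x) v).
Proof.
move=> lt_AN lt_BN; apply: functional_extensionality => p.
rewrite wopE // !rwopE // !wopE // !mulgA invMg adjtV.
have [maps | not_maps] := boolP (maps_pair p B A).
  have ascent_flipl : ascent (p * adjt A) B = ~~ ascent p B.
    by rewrite -(maps_pair_adjtM maps) ascent_adjtM.
  have ascent_flipr : ascent (p^-1 * adjt B) A = ~~ ascent p^-1 A.
    by rewrite -[adjt B]adjtV -invMg (maps_pair_adjtM maps) invMg adjtV ascent_adjtM.
  rewrite ascent_flipl ascent_flipr (maps_pair_adjtM maps) mulg_adjtK.
  rewrite (maps_pair_ascentV lt_BN lt_AN maps) /rate.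
  by case: (ascent p B) => /=; ring.
rewrite ascent_Madjt // (@ascent_Madjt _ _ _ p^-1) ?maps_pairV //.
ring.
Qed.

Lemma wop_delta1 A x : (A.+1 < N)%N -> wop q (A, x) (delta 1%g) = rwop (A, x) (delta 1%g).
Proof.
move=> lt_AN; apply: functional_extensionality => p.
rewrite wopE // rwopE // /delta mulg_eq1 -eq_invg_mul adjtV [adjt A == p]eq_sym.
have [-> | _] := eqVneq p 1%g; first by rewrite invg1.
have [-> | _] := eqVneq p (adjt A); first by rewrite adjtV.
by rewrite !mulr0.
Qed.

Definition adjacent (Ax : 'I_N * C) : bool := (Ax.1.+1 < N)%N.

Lemma antipode_foldl_wop l v :
  antipode (foldl (fun v Ax => wop q Ax v) v l)
  = foldl (fun v Ax => rwop Ax v) (antipode v) l.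
Proof. by elim: l v => [|Ax l IHl] v //=; rewrite IHl rwop_antipode. Qed.

Lemma wop_foldl_rwopC Ax l v : all adjacent (Ax :: l) ->
  wop q Ax (foldl (fun v Ax => rwop Ax v) v l)
  = foldl (fun v Ax => rwop Ax v) (wop q Ax v) l.
Proof.
case: Ax => A x /= /andP[lt_AN]; elim: l v => [|[B y] l IHl] v //= /andP[lt_BN adj_l].
by rewrite IHl // wop_rwopC.
Qed.

Lemma foldr_wop_delta1 l : all adjacent l ->
  foldr (fun Ax v => wop q Ax v) (delta 1%g) l
  = foldl (fun v Ax => rwop Ax v) (delta 1%g) l.
Proof.
elim: l => [|[A x] l IHl] //= /andP[lt_AN adj_l].
by rewrite IHl // wop_foldl_rwopC /= ?lt_AN // wop_delta1.
Qed.

End Operators.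

Theorem theorem2p2 (N : nat) (hN : (1 <= N)%N) (q : C) (l : seq ('I_N * C))
  (hl : all (fun Ax : 'I_N * C => (Ax.1).+1 < N)%N l) (pi : 'S_N) :
  f q l 1%g pi = ftilde q l 1%g (pi^-1)%g.
Proof.
have -> : f q l 1 pi = antipode (f q l 1) pi^-1 by rewrite /antipode invgK.
by rewrite /f antipode_foldl_wop antipode_delta invg1 -foldr_wop_delta1.
Qed.
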